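(* Let $p$ be one of $(123,\emptyset,\{0,1,2\})$, $(123,\emptyset,\{0,1,3\})$, $(132,\emptyset,\{0,1,2\})$, $(132,\emptyset,\{0,1,3\})$, $(132,\emptyset,\{0,2,3\})$, $(132,\emptyset,\{1,2,3\})$, or any pattern in the same symmetry class as one of these. Then for all $n\ge3$, $a_n(p)=\frac56\,n!$.
   Context: For $n\ge1$, $\mathcal S_n$ is the set of permutations $\pi=\pi_1\cdots\pi_n$ of $[n]$. A bi-vincular pattern of length $k$ is a triple $p=(\sigma,X,Y)$ with $\sigma\in\mathcal S_k$ and $X,Y\subseteq\{0,1,\dots,k\}$. A permutation $\pi\in\mathcal S_n$ contains $p$ if there are indices $1\le i_1<\dots<i_k\le n$ such that $(\pi_{i_1},\dots,\pi_{i_k})$ is order-isomorphic to $\sigma$ and, letting $j_1<\dots<j_k$ be the values $\pi_{i_1},\dots,\pi_{i_k}$ sorted increasingly and setting $i_0=j_0=0$, $i_{k+1}=j_{k+1}=n+1$, one has $i_{x+1}=i_x+1$ for all $x\in X$ and $j_{y+1}=j_y+1$ for all $y\in Y$. Otherwise $\pi$ avoids $p$; $a_n(p)$ is the number of $\pi\in\mathcal S_n$ avoiding $p$. Symmetries: $p^{i}=(\sigma^{-1},Y,X)$, $p^{r}=(\sigma^{r},\{k-x:x\in X\},Y)$, $p^{c}=(\sigma^{c},X,\{k-y:y\in Y\})$ with $\sigma^r_j=\sigma_{k+1-j}$, $\sigma^c_j=k+1-\sigma_j$; the symmetry class of $p$ consists of all patterns obtained from $p$ by finitely many applications of these maps.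 *)

From HB Require Import structures.
From mathcomp Require Import all_boot all_order all_algebra all_fingroup.
From Stdlib Require List.
Set Implicit Arguments. Unset Strict Implicit. Unset Printing Implicit Defensive.

(* Conventions: a permutation pi of [n] is represented by s : 'S_n (on 'I_n =
   {0..n-1}) via pi_i = (s (i-1)) + 1 for i in [n] (1-based).
   A bi-vincular pattern of length k is (sigma, X, Y) with sigma : 'S_k
   (sigma_j = (sig (j-1)) + 1) and X, Y subsets of {0,...,k} = 'I_k.+1. *)

Record bvpat (k : nat) := BVPat {
  psig : 'S_k;
  pX : {set 'I_k.+1};
  pY : {set 'I_k.+1}
}.

(* An occurrence is given by f : 'I_k -> 'I_n (0-based positions);
   i_{a+1} = (f a) + 1 in 1-based indexing. *)

(* extended list of positions: i_0 = 0, i_1 .. i_k, i_{k+1} = n+1 *)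
Definition ext_pos (n k : nat) (f : {ffun 'I_k -> 'I_n}) : seq nat :=
  0 :: [seq (f a).+1 | a <- enum 'I_k] ++ [:: n.+1].

(* extended sorted list of values: j_0 = 0, j_1 < ... < j_k the values
   pi_{i_1},...,pi_{i_k} sorted increasingly, j_{k+1} = n+1 *)
Definition ext_val (n k : nat) (s : 'S_n) (f : {ffun 'I_k -> 'I_n}) : seq nat :=
  0 :: sort leq [seq (s (f a)).+1 | a <- enum 'I_k] ++ [:: n.+1].

Definition contains (n k : nat) (s : 'S_n) (p : bvpat k) : bool :=
  [exists f : {ffun 'I_k -> 'I_n},
    [&& [forall a : 'I_k, forall b : 'I_k, (a < b) ==> (f a < f b)],
        [forall a : 'I_k, forall b : 'I_k,
            (s (f a) < s (f b)) == (psig p a < psig p b)],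
        [forall x : 'I_k.+1, (x \in pX p) ==>
            (nth 0 (ext_pos f) x.+1 == (nth 0 (ext_pos f) x).+1)] &
        [forall y : 'I_k.+1, (y \in pY p) ==>
            (nth 0 (ext_val s f) y.+1 == (nth 0 (ext_val s f) y).+1)]]].

Definition avoids (n k : nat) (s : 'S_n) (p : bvpat k) : bool := ~~ contains s p.

Definition a_n (n k : nat) (p : bvpat k) : nat := #|[set s : 'S_n | avoids s p]|.

Definition rev_perm (k : nat) : 'S_k := perm (@rev_ord_inj k).

(* sigma^r_j = sigma_{k+1-j} ; in MathComp (s * t) x = t (s x) *)
Definition sig_r (k : nat) (s : 'S_k) : 'S_k := rev_perm k * s.
(* sigma^c_j = k+1-sigma_j *)
Definition sig_c (k : nat) (s : 'S_k) : 'S_k := s * rev_perm k.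

Definition set_rev (k : nat) (X : {set 'I_k.+1}) : {set 'I_k.+1} :=
  [set rev_ord x | x in X].

Definition pat_i (k : nat) (p : bvpat k) : bvpat k :=
  BVPat (psig p)^-1 (pY p) (pX p).
Definition pat_r (k : nat) (p : bvpat k) : bvpat k :=
  BVPat (sig_r (psig p)) (set_rev (pX p)) (pY p).
Definition pat_c (k : nat) (p : bvpat k) : bvpat k :=
  BVPat (sig_c (psig p)) (pX p) (set_rev (pY p)).

Inductive sym_class (k : nat) (p : bvpat k) : bvpat k -> Prop :=
| sc_refl : sym_class p p
| sc_i q : sym_class p q -> sym_class p (pat_i q)
| sc_r q : sym_class p q -> sym_class p (pat_r q)
| sc_c q : sym_class p q -> sym_class p (pat_c q).

Definition s123 : 'S_3 := 1%g.
Definition s132 : 'S_3 := tperm (inord 1 : 'I_3) (inord 2).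

Definition set3 (a b c : nat) : {set 'I_4} := [set inord a; inord b; inord c].

Definition base_patterns : seq (bvpat 3) :=
  [:: BVPat s123 set0 (set3 0 1 2);
      BVPat s123 set0 (set3 0 1 3);
      BVPat s132 set0 (set3 0 1 2);
      BVPat s132 set0 (set3 0 1 3);
      BVPat s132 set0 (set3 0 2 3);
      BVPat s132 set0 (set3 1 2 3)].

Definition is_base_pattern (q : bvpat 3) : Prop := List.In q base_patterns.

From HB Require Import structures.
From mathcomp Require Import all_boot all_order all_algebra all_fingroup.
From mathcomp Require Import zify ring.
Set Implicit Arguments. Unset Strict Implicit. Unset Printing Implicit Defensive.

(* If the position constraint set X of a pattern of length k consists of all
   but one point m of {0..k}, an occurrence is rigid: its positions must be
   1..m and n-k+m+1..n.  So s contains p iff the pattern formed by s at these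
   fixed positions is sigma, and since the k! patterns at fixed positions are
   equidistributed over S_n, exactly n!/k! permutations contain p.  The case of
   a co-singleton value set Y reduces to this one through s^-1.  The six base
   patterns have X empty and |Y| = 3, and i, r, c preserve this shape up to
   swapping X and Y, so a_n(p) = n! - n!/6. *)

Definition pattern_at n k (s : 'S_n) (a : 'I_k -> 'I_n) (sg : 'S_k) : bool :=
  [forall i, forall j, (s (a i) < s (a j)) == (sg i < sg j)].

Lemma card_ord_lt k m : m <= k -> #|[set v : 'I_k | v < m]| = m.
Proof.
move=> mk; have inj : injective (widen_ord mk) by move=> i j /(congr1 val) /= /val_inj.
rewrite -[RHS](card_ord m) -(card_imset _ inj); apply: eq_card => v; rewrite inE.
apply/idP/imsetP => [vm|[i _ ->]]; last by rewrite /= ltn_ord.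
by exists (Ordinal vm) => //; apply/val_inj.
Qed.

Lemma card_rank_inj k (g : 'I_k -> 'I_k) i :
  injective g -> #|[set j | g j < g i]| = g i.
Proof.
move=> g_inj; have -> : [set j | g j < g i] = g @^-1: [set v : 'I_k | v < g i].
  by apply/setP => j; rewrite !inE.
by rewrite card_preimset // card_ord_lt // ltnW.
Qed.

Lemma order_iso_perm_uniq k (g : 'I_k -> 'I_k) (s : 'S_k) :
  (forall i j, (g i < g j) = (s i < s j)) -> g =1 s.
Proof.
move=> gs.
have g_inj : injective g.
  move=> i j gij; apply: (@perm_inj _ s); apply/val_inj.
  by move: (gs i j) (gs j i); rewrite gij ltnn; case: ltngtP.
move=> i; apply/val_inj.
rewrite /= -(card_rank_inj i g_inj) -(card_rank_inj i (@perm_inj _ s)).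
by apply: eq_card => j; rewrite !inE gs.
Qed.

(* The permutation sending [i] to the rank of [x i]. *)
Lemma order_iso_perm_exists k (x : 'I_k -> nat) : injective x ->
  exists s : 'S_k, forall i j, (x i < x j) = (s i < s j).
Proof.
move=> x_inj; pose r i := #|[set j | x j < x i]|.
have r_lt i : r i < k.
  rewrite -[k]card_ord; apply: proper_card; apply/properP.
  by split; [apply/subsetP | exists i; rewrite ?inE ?ltnn].
have r_mono i j : x i < x j -> r i < r j.
  move=> xij; apply: proper_card; apply/properP; split.
    by apply/subsetP => l; rewrite !inE => /ltn_trans; apply.
  by exists i; rewrite !inE ?ltnn.
have rE i j : (x i < x j) = (r i < r j).
  case: (ltngtP (x i) (x j)) => [/r_mono -> // | /r_mono rji | /x_inj -> ].
    by apply/esym/negbTE; rewrite -leqNgt ltnW.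
  by rewrite ltnn.
have rk_inj : injective (fun i => Ordinal (r_lt i)).
  move=> i j /(congr1 val) /= rij; apply/x_inj.
  by move: (rE i j) (rE j i); rewrite rij ltnn; case: ltngtP.
by exists (perm rk_inj) => i j; rewrite !permE rE.
Qed.

Lemma perm_transport n k (a : 'I_k -> 'I_n) (sg : 'S_k) : injective a ->
  exists t : 'S_n, forall i, t (a i) = a (sg i).
Proof.
move=> a_inj; pose f x := if [pick i | a i == x] is Some i then a (sg i) else x.
have fa i : f (a i) = a (sg i).
  by rewrite /f; case: pickP => [j /eqP/a_inj -> // | /(_ i)]; rewrite eqxx.
have f_inj : injective f.
  move=> x y; rewrite /f.
  case: pickP => [i /eqP <- | Nx]; case: pickP => [j /eqP <- | Ny] //.
  - by move/a_inj/perm_inj ->.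
  - by move=> E; move: (Ny (sg i)); rewrite E eqxx.
  - by move=> E; move: (Nx (sg j)); rewrite -E eqxx.
by exists (perm f_inj) => i; rewrite permE fa.
Qed.

Lemma card_pattern_at_id n k (a : 'I_k -> 'I_n) (sg : 'S_k) : injective a ->
  #|[set s | pattern_at s a sg]| = #|[set s | pattern_at s a 1]|.
Proof.
move=> a_inj; have [t tE] := perm_transport (sg^-1)%g a_inj.
rewrite -[RHS](card_preimset _ (@mulgI _ t)); apply: eq_card => s.
rewrite !inE /pattern_at; apply/forallP/forallP => H i; apply/forallP => j.
- by move: (forallP (H (sg^-1 i)%g) (sg^-1 j)%g); rewrite !permM !tE !permKV !perm1.
- by move: (forallP (H (sg i)) (sg j)); rewrite !permM !tE !permK !perm1.
Qed.

(* Every [s] has exactly one pattern at [a], and all [k`!] patterns are equally frequent. *)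
Lemma card_pattern_at n k (a : 'I_k -> 'I_n) (sg : 'S_k) : injective a ->
  #|[set s | pattern_at s a sg]| * k`! = n`!.
Proof.
move=> a_inj.
have unique_pattern (s : 'S_n) : \sum_(r : 'S_k) (pattern_at s a r : nat) = 1.
  have sa_inj : injective (fun i => val (s (a i))) by move=> i j /val_inj/perm_inj/a_inj.
  have [r0 r0E] := order_iso_perm_exists sa_inj.
  rewrite (bigD1 r0) //= big1 => [|r rr0].
    suff -> : pattern_at s a r0 by [].
    by apply/forallP => i; apply/forallP => j; rewrite r0E.
  apply/eqP; rewrite eqb0; apply: contra rr0 => sr.
  apply/eqP/permP => i; apply: order_iso_perm_uniq => {}i j.
  by rewrite -r0E; move/forallP: sr => /(_ i) /forallP /(_ j) /eqP ->.
have <- : \sum_(s : 'S_n) 1 = n`! by rewrite -card_Sn -sum1_card.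
rewrite (eq_bigr _ (fun s _ => esym (unique_pattern s))).
rewrite exchange_big /= (eq_bigr (fun r => #|[set s | pattern_at s a sg]|)).
  by rewrite sum_nat_const card_Sn mulnC.
move=> r _; rewrite (card_pattern_at_id sg a_inj) -(card_pattern_at_id r a_inj).
by rewrite -sum1_card [RHS]big_mkcond /=; apply: eq_bigr => s _; rewrite inE; case: pattern_at.
Qed.

(* [ext_pos f] and [ext_val s f] are [framed n L] for the list [L] of positions,
   resp. sorted values, of the occurrence [f]. *)
Definition framed n (L : seq nat) : seq nat := 0 :: L ++ [:: n.+1].

(* 0-based position of entry [i] of the occurrence whose first [m] entries sit
   at the left end of [1..n] and whose other entries sit at its right end. *)
Definition pin n k m i : nat := if i < m then i else n - k + i.

Definition pinned_seq n k m : seq nat := [seq (pin n k m i).+1 | i <- iota 0 k].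

Lemma chain_from_endsP (E : seq nat) k n m : m <= k -> k <= n ->
    nth 0 E 0 = 0 -> nth 0 E k.+1 = n.+1 ->
  (forall x, x <= k -> x != m -> nth 0 E x.+1 = (nth 0 E x).+1) <->
  (forall x, x <= k.+1 -> nth 0 E x = if x <= m then x else n - k + x).
Proof.
move=> mk kn E0 Ek; split=> [chain | formula x xk xm]; last first.
  rewrite !formula ?ltnS ?(leqW xk) //.
  by do ?case: ifP; lia.
have prefix x : x <= m -> nth 0 E x = x.
  elim: x => [//|y IH] ym; rewrite chain ?IH ?ltn_eqF //; [exact: ltnW | lia].
have suffix d : d <= k - m -> nth 0 E (k.+1 - d) = n.+1 - d.
  elim: d => [|d IH] dkm; first by rewrite !subn0.
  have km : k - d != m by lia.
  have := chain (k - d) (leq_subr d k) km.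
  by rewrite -subSn ?IH ?subSS; lia.
move=> x xk; case: leqP => [/prefix // | mx].
have -> : x = k.+1 - (k.+1 - x) by rewrite subKn.
by rewrite suffix; lia.
Qed.

Lemma nth_framed n L i : i < size L -> nth 0 (framed n L) i.+1 = nth 0 L i.
Proof. by move=> iL; rewrite /= nth_cat iL. Qed.

Lemma nth_framed_last n L : nth 0 (framed n L) (size L).+1 = n.+1.
Proof. by rewrite /= nth_cat ltnn subnn. Qed.

Lemma nth_pinned_seq n k m i : i < k -> nth 0 (pinned_seq n k m) i = (pin n k m i).+1.
Proof. by move=> ik; rewrite (nth_map 0) ?size_iota // nth_iota. Qed.

Lemma framed_pinnedP n k m L : m <= k -> k <= n -> size L = k ->
  L = pinned_seq n k m <->
  (forall x, x <= k.+1 -> nth 0 (framed n L) x = if x <= m then x else n - k + x).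
Proof.
move=> mk kn szL; split=> [-> | formula].
  case=> [|i] // ik; have [ilt | ->] : i < k \/ i = k by lia.
    by rewrite nth_framed ?size_map ?size_iota // nth_pinned_seq // /pin; do ?case: ifP; lia.
  by have := nth_framed_last n (pinned_seq n k m); rewrite size_map size_iota => ->; case: ifP; lia.
apply: (@eq_from_nth _ 0); first by rewrite size_map size_iota.
move=> i iL; rewrite -(nth_framed n) // formula ?nth_pinned_seq /pin; try lia.
by do ?case: ifP; lia.
Qed.

Lemma chain_framedE n k (m : 'I_k.+1) L : k <= n -> size L = k ->
  [forall x : 'I_k.+1, (x \in ~: [set m]) ==>
     (nth 0 (framed n L) x.+1 == (nth 0 (framed n L) x).+1)] = (L == pinned_seq n k m).
Proof.
move=> kn szL; have mk : m <= k by rewrite -ltnS.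
have endL : nth 0 (framed n L) k.+1 = n.+1 by rewrite -szL nth_framed_last.
have chainP := @chain_from_endsP (framed n L) _ _ _ mk kn erefl endL.
apply/forallP/eqP => [chain | /(framed_pinnedP mk kn szL)].
  apply/(framed_pinnedP mk kn szL)/chainP => x xk xm.
  have /implyP := chain (Ordinal (xk : x < k.+1)).
  by rewrite !inE -val_eqE /= => /(_ xm)/eqP.
move/chainP => chain x.
by apply/implyP; rewrite !inE => xm; rewrite chain ?val_eqE // -ltnS.
Qed.

Lemma pin_lt n k m (i : 'I_k) : k <= n -> pin n k m i < n.
Proof. by rewrite /pin; have := ltn_ord i; case: ifP; lia. Qed.

Lemma pin_homo n k m : {homo pin n k m : i j / i <= j}.
Proof. by move=> i j; rewrite /pin; do ?case: ifP; lia. Qed.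

Lemma pin_mono n k m : {mono pin n k m : i j / i < j}.
Proof. by move=> i j; rewrite /pin; do ?case: ifP; lia. Qed.

Definition pinned_pos n k (kn : k <= n) m (i : 'I_k) : 'I_n := Ordinal (pin_lt m i kn).

Lemma pinned_pos_lt n k (kn : k <= n) m i j :
  (pinned_pos kn m i < pinned_pos kn m j) = (i < j).
Proof. exact: pin_mono. Qed.

Lemma pinned_pos_inj n k (kn : k <= n) m : injective (pinned_pos kn m).
Proof.
move=> i j pij; apply/val_inj.
by move: (pinned_pos_lt kn m i j) (pinned_pos_lt kn m j i); rewrite pij ltnn; case: ltngtP.
Qed.

Lemma map_pinned_pos n k (kn : k <= n) m :
  [seq (pinned_pos kn m i).+1 | i <- enum 'I_k] = pinned_seq n k m.
Proof. by rewrite /pinned_seq -val_enum_ord -map_comp. Qed.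

Lemma sorted_pinned_seq n k m : sorted leq (pinned_seq n k m).
Proof. by apply: homo_sorted (iota_sorted 0 k) => i j /(pin_homo n k m). Qed.

Lemma eq_map_enum_ord T k (F G : 'I_k -> T) :
  [seq F i | i <- enum 'I_k] = [seq G i | i <- enum 'I_k] -> F =1 G.
Proof.
by move=> /eq_in_map FG i; apply: FG; rewrite mem_enum.
Qed.

Lemma perm_map_enum_perm k (sg : 'S_k) : perm_eq [seq sg i | i <- enum 'I_k] (enum 'I_k).
Proof.
apply: uniq_perm; [by rewrite map_inj_uniq ?enum_uniq //; apply: perm_inj | exact: enum_uniq |].
by move=> i; rewrite mem_enum; apply/mapP; exists (sg^-1 i)%g; rewrite ?mem_enum ?permKV.
Qed.

Lemma increasing_ltE n k (f : 'I_k -> 'I_n) :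
  [forall a : 'I_k, forall b : 'I_k, (a < b) ==> (f a < f b)] -> forall i j, (f i < f j) = (i < j).
Proof.
move=> f_incr i j.
have lt_f (a b : 'I_k) : a < b -> f a < f b.
  by move=> ab; move/forallP: f_incr => /(_ a) /forallP /(_ b); rewrite ab.
case: (ltngtP i j) => [/lt_f // | /lt_f fji | /val_inj -> ]; last by rewrite ltnn.
by apply/negbTE; rewrite -leqNgt ltnW.
Qed.

Lemma eq_pattern_at n k (s : 'S_n) (a b : 'I_k -> 'I_n) sg :
  a =1 b -> pattern_at s a sg = pattern_at s b sg.
Proof. by move=> ab; apply: eq_forallb => i; apply: eq_forallb => j; rewrite !ab. Qed.

Lemma size_map_enum_ord T k (F : 'I_k -> T) : size [seq F i | i <- enum 'I_k] = k.
Proof. by rewrite size_map size_enum_ord. Qed.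

Lemma contains_pinned_posE n k (p : bvpat k) (m : 'I_k.+1) (kn : k <= n) (s : 'S_n) :
  pX p = ~: [set m] -> pY p = set0 -> contains s p = pattern_at s (pinned_pos kn m) (psig p).
Proof.
move=> pXm pY0; rewrite /contains pXm pY0.
apply/existsP/idP => [[f /and4P[_ sf chain _]] | sp].
  move: chain; rewrite [ext_pos f]/ext_pos -/(framed n _).
  rewrite (chain_framedE m kn (size_map_enum_ord _)) -map_pinned_pos.
  move=> /eqP/eq_map_enum_ord fE.
  by rewrite -(eq_pattern_at _ _ (fun a => val_inj (succn_inj (fE a)))).
exists [ffun i => pinned_pos kn m i]; apply/and4P; split.
- by apply/forallP => a; apply/forallP => b; rewrite !ffunE pinned_pos_lt; apply/implyP.
- by rewrite -(eq_pattern_at _ _ (ffunE _)) in sp.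
- rewrite [ext_pos _]/ext_pos -/(framed n _).
  rewrite (chain_framedE m kn (size_map_enum_ord _)) -map_pinned_pos.
  by apply/eqP/eq_map => a; rewrite ffunE.
- by apply/forallP => y; rewrite inE.
Qed.

Lemma contains_pinned_valE n k (p : bvpat k) (m : 'I_k.+1) (kn : k <= n) (s : 'S_n) :
  pX p = set0 -> pY p = ~: [set m] ->
  contains s p = pattern_at (s^-1)%g (pinned_pos kn m \o psig p) 1.
Proof.
move=> pX0 pYm; rewrite /contains pX0 pYm; set sg := psig p.
have size_sort_vals (f : 'I_k -> 'I_n) : size (sort leq [seq (s (f a)).+1 | a <- enum 'I_k]) = k.
  by rewrite size_sort size_map_enum_ord.
apply/existsP/idP => [[f /and4P[f_incr sf _ chain]] | sp].
  move: chain; rewrite [ext_val s f]/ext_val -/(framed n _).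
  rewrite (chain_framedE m kn (size_sort_vals f)) -map_pinned_pos => /eqP sortE.
  have [g gE] : exists g : 'I_k -> 'I_k, forall i, s (f i) = pinned_pos kn m (g i).
    apply: (@fin_all_exists _ (fun _ => 'I_k) (fun i j => s (f i) = pinned_pos kn m j)) => i.
    have : (s (f i)).+1 \in [seq (pinned_pos kn m j).+1 | j <- enum 'I_k].
      by rewrite -sortE mem_sort map_f ?mem_enum.
    by case/mapP => j _ [sfj]; exists j; apply/val_inj.
  have gs : g =1 sg.
    apply: order_iso_perm_uniq => i j; rewrite -(pinned_pos_lt kn m) -!gE.
    by move/forallP: sf => /(_ i)/forallP/(_ j)/eqP.
  apply/forallP => i; apply/forallP => j; rewrite !perm1 /= -!gs -!gE !permK.
  by rewrite (increasing_ltE f_incr).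
exists [ffun i => (s^-1)%g (pinned_pos kn m (sg i))]; apply/and4P; split.
- apply/forallP => a; apply/forallP => b; rewrite !ffunE; apply/implyP => ab.
  by move/forallP: sp => /(_ a)/forallP/(_ b); rewrite !perm1 ab => /eqP.
- by apply/forallP => a; apply/forallP => b; rewrite !ffunE !permKV pinned_pos_lt.
- by apply/forallP => x; rewrite inE.
rewrite [ext_val _ _]/ext_val -/(framed n _) (chain_framedE m kn (size_sort_vals _)).
rewrite -(sorted_sort leq_trans (sorted_pinned_seq n k m)) -map_pinned_pos; apply/eqP.
apply/perm_sortP; [exact: leq_total | exact: leq_trans | exact: anti_leq |].
have -> : [seq (s ([ffun i => (s^-1)%g (pinned_pos kn m (sg i))] a)).+1 | a <- enum 'I_k]
    = [seq (pinned_pos kn m j).+1 | j <- [seq sg a | a <- enum 'I_k]].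
  by rewrite -[RHS]map_comp; apply: eq_map => a; rewrite /= ffunE permKV.
exact/perm_map/perm_map_enum_perm.
Qed.

Definition pinned_pattern k (p : bvpat k) : Prop :=
  (pY p = set0 /\ #|pX p| = k) \/ (pX p = set0 /\ #|pY p| = k).

Lemma set_rev0 k : set_rev (set0 : {set 'I_k.+1}) = set0.
Proof. by rewrite /set_rev imset0. Qed.

Lemma card_set_rev k (X : {set 'I_k.+1}) : #|set_rev X| = #|X|.
Proof. by rewrite /set_rev card_imset //; exact: rev_ord_inj. Qed.

Lemma pinned_pattern_sym k (q p : bvpat k) :
  sym_class q p -> pinned_pattern q -> pinned_pattern p.
Proof.
move=> qp pq; elim: qp => //= r _ [[r1 r2] | [r1 r2]].
all: first [by left; rewrite /= ?r1 ?set_rev0 ?card_set_rev | by right; rewrite /= ?r1 ?set_rev0 ?card_set_rev].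
Qed.

Lemma base_pattern_pinned q : is_base_pattern q -> pinned_pattern q.
Proof.
rewrite /is_base_pattern /=.
by do !case=> [<-|]; right; split=> //; rewrite /set3 -setUA cardsU1 cards2 !inE -!val_eqE /= !inordK.
Qed.

Lemma card_setC1_exists k (X : {set 'I_k.+1}) : #|X| = k -> exists m, X = ~: [set m].
Proof.
move=> cardX; have : #|~: X| == 1 by rewrite cardsCs setCK card_ord cardX subSnn.
by case/cards1P => m Xm; exists m; rewrite -Xm setCK.
Qed.

Lemma card_contains_pinned n k (p : bvpat k) : pinned_pattern p -> k <= n ->
  #|[set s : 'S_n | contains s p]| * k`! = n`!.
Proof.
case=> [[pY0 /card_setC1_exists [m pXm]] | [pX0 /card_setC1_exists [m pYm]]] kn.
  rewrite -(card_pattern_at (psig p) (@pinned_pos_inj _ _ kn m)); congr (_ * _).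
  by apply: eq_card => s; rewrite !inE (contains_pinned_posE kn s pXm pY0).
have a_inj : injective (pinned_pos kn m \o psig p) by move=> i j /pinned_pos_inj/perm_inj.
rewrite -(card_pattern_at 1 a_inj) -[in RHS](card_preimset _ (@invg_inj 'S_n)).
congr (_ * _); apply: eq_card => s.
by rewrite !inE (contains_pinned_valE kn s pX0 pYm).
Qed.

Unset Implicit Arguments.

Theorem mainTheorem15 (p : bvpat 3) :
  (exists2 q, is_base_pattern q & sym_class q p) ->
  forall n : nat, (3 <= n)%N ->
    ((a_n n p)%:R : rat) = ((5%:R / 6%:R) * (n`!)%:R)%R.
Proof.
case=> q /base_pattern_pinned q_pinned /pinned_pattern_sym/(_ q_pinned) p_pinned n n3.
have contain6 := card_contains_pinned p_pinned n3; rewrite (_ : 3`! = 6) // in contain6.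
have avoid_or_contain : a_n n p + #|[set s : 'S_n | contains s p]| = n`!.
  rewrite -card_Sn -(cardsC [set s | contains s p]) addnC; congr (_ + _).
  by apply: eq_card => s; rewrite !inE.
have -> : a_n n p = 5 * #|[set s : 'S_n | contains s p]| by lia.
by rewrite -contain6 !GRing.natrM; field.
Qed.
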